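(* For every $n$ with $2\le n\le\infty$, the two identities $$ysxt\,xy\,hxky \approx ysxt\,yx\,hxky \quad\text{and}\quad xsyt\,xy\,hxky \approx xsyt\,yx\,hxky$$ constitute a finite identity basis for the Baxter monoid $\mathrm{baxt}_n$. Consequently, all Baxter monoids of rank at least $2$ (including rank $\infty$) are equationally equivalent.
   Context: Let $\mathcal{A}=\{1<2<3<\cdots\}$, $\mathcal{A}_n=\{1<\cdots<n\}$, $\mathcal{A}_\infty=\mathcal{A}$. Right strict binary search tree: labelled rooted binary tree in which each node's label is $\ge$ every label in its left subtree and $<$ every label in its right subtree; inserting $a$: if empty create node $a$, else with root label $x$ insert into right subtree if $a>x$, left subtree otherwise. $\mathrm{P}_{\mathrm{sylv}}(w_1\cdots w_k)$ is obtained from the empty tree by inserting $w_k,\dots,w_1$ in this order. Left strict binary search tree: each node's label is $>$ every label in its left subtree and $\le$ every label in its right subtree; inserting $a$: if empty create node $a$, else with root label $x$ insert into left subtree if $a<x$, right subtree otherwise. $\mathrm{P}^\sharp(w_1\cdots w_k)$ is obtained from the empty tree by inserting $w_1,\dots,w_k$ in this order. Set $\mathrm{P}_{\mathrm{baxt}}(w)=(\mathrm{P}^\sharp(w),\mathrm{P}_{\mathrm{sylv}}(w))$; $u\equiv v\iff\mathrm{P}_{\mathrm{baxt}}(u)=\mathrm{P}_{\mathrm{baxt}}(v)$ is a congruence, and $\mathrm{baxt}_n=\mathcal{A}_n^*/{\equiv}$. Identities: $\mathcal{X}$ is a countably infinite alphabet; an identity is $\mathbf{u}\approx\mathbf{v}$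 with $\mathbf{u},\mathbf{v}\in\mathcal{X}^*$; a monoid $S$ satisfies it if $\varphi(\mathbf{u})=\varphi(\mathbf{v})$ for all maps $\varphi:\mathcal{X}\to S$ (extended to monoid homomorphisms). $\mathbf{u}\approx\mathbf{v}$ is derived from a set $\Sigma$ if there is a sequence $\mathbf{u}=\mathbf{u}_1,\dots,\mathbf{u}_m=\mathbf{v}$ with $\mathbf{u}_i=\mathbf{a}\varphi(\mathbf{p})\mathbf{b}$, $\mathbf{u}_{i+1}=\mathbf{a}\varphi(\mathbf{q})\mathbf{b}$ for some words $\mathbf{a},\mathbf{b}\in\mathcal{X}^*$, a monoid endomorphism $\varphi$ of $\mathcal{X}^*$ (letters may go to the empty word), and $\mathbf{p}\approx\mathbf{q}\in\Sigma$. A finite identity basis for $S$ is a finite set $\Sigma$ of identities satisfied by $S$ from which every identity satisfied by $S$ is derived. Two monoids are equationally equivalent if they satisfy the same identities. *)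

From mathcomp Require Import all_boot.
Set Implicit Arguments. Unset Strict Implicit. Unset Printing Implicit Defensive.

(** Ranks: [Some n] is rank n, [None] is rank infinity. *)
Definition rank := option nat.
Definition rank_ge2 (n : rank) : Prop :=
  match n with Some m => 2 <= m | None => True end.

Definition in_alph (n : rank) (a : nat) : bool :=
  (0 < a) && (match n with Some m => a <= m | None => true end).

Inductive tree := Leaf | Node of tree & nat & tree.

Fixpoint insertR (a : nat) (t : tree) : tree :=
  match t with
  | Leaf => Node Leaf a Leaf
  | Node l x r => if x < a then Node l x (insertR a r) else Node (insertR a l) x r
  end.

Fixpoint insertL (a : nat) (t : tree) : tree :=
  match t with
  | Leaf => Node Leaf a Leaf
  | Node l x r => if a < x then Node (insertL a l) x r else Node l x (insertL a r)
  end.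

(** P_sylv(w_1...w_k): insert w_k, ..., w_1 in this order. *)
Definition Psylv (w : seq nat) : tree := foldr insertR Leaf w.
(** P^sharp(w_1...w_k): insert w_1, ..., w_k in this order. *)
Definition Psharp (w : seq nat) : tree := foldl (fun t a => insertL a t) Leaf w.
Definition Pbaxt (w : seq nat) : tree * tree := (Psharp w, Psylv w).

(** Baxter congruence. baxt_n = A_n^* / baxt_equiv. *)
Definition baxt_equiv (u v : seq nat) : Prop := Pbaxt u = Pbaxt v.

(** Words over the variable alphabet X (= nat) and substitutions
    (monoid morphisms X^* -> Y^* determined by images of letters). *)
Definition subst (phi : nat -> seq nat) (u : seq nat) : seq nat :=
  flatten (map phi u).

Definition identity := (seq nat * seq nat)%type.

(** baxt_n satisfies u ~ v: every map X -> baxt_n is given by choosing a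
    representative word over A_n for each variable; the image of a word is
    the class of the concatenation. *)
Definition baxt_satisfies (n : rank) (id : identity) : Prop :=
  forall sigma : nat -> seq nat,
    (forall i, all (in_alph n) (sigma i)) ->
    baxt_equiv (subst sigma id.1) (subst sigma id.2).

Definition deriv_step (Sigma : seq identity) (u w : seq nat) : Prop :=
  exists (a b : seq nat) (phi : nat -> seq nat) (p q : seq nat),
    ((p, q) \in Sigma \/ (q, p) \in Sigma) /\
    u = a ++ subst phi p ++ b /\ w = a ++ subst phi q ++ b.

Inductive derivable (Sigma : seq identity) : seq nat -> seq nat -> Prop :=
  | der_refl u : derivable Sigma u u
  | der_step u w v : deriv_step Sigma u w -> derivable Sigma w v -> derivable Sigma u v.

Definition baxt_identity_basis (n : rank) (Sigma : seq identity) : Prop :=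
  (forall id, id \in Sigma -> baxt_satisfies n id) /\
  (forall id : identity, baxt_satisfies n id -> derivable Sigma id.1 id.2).

Definition vx := 0. Definition vy := 1. Definition vs := 2.
Definition vt := 3. Definition vh := 4. Definition vk := 5.

Definition baxt_basis : seq identity :=
  [:: ([:: vy; vs; vx; vt; vx; vy; vh; vx; vk; vy],
       [:: vy; vs; vx; vt; vy; vx; vh; vx; vk; vy]);
      ([:: vx; vs; vy; vt; vx; vy; vh; vx; vk; vy],
       [:: vx; vs; vy; vt; vy; vx; vh; vx; vk; vy])].

From mathcomp Require Import all_boot zify.
Set Implicit Arguments. Unset Strict Implicit. Unset Printing Implicit Defensive.

(** Both tableaux are built by one insertion procedure, parametrised by the side to
    which a label equal to a node is sent. In a search tree, inserting a label that is
    already present commutes with inserting any other present label; hence two adjacent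
    factors whose letters all occur both before and after them commute modulo the Baxter
    congruence, which gives the basis identities. The congruence is compatible with
    concatenation because the tree of a word determines the tree of its restriction to
    any interval of letters.
    Conversely, evaluating an identity [u ~ v] of [baxt_n] ([n >= 2]) at substitutions
    with values in {1, 2} shows that [u] and [v] have the same content and, for all
    letters [e] and [x], the same number of [x]'s before the first [e] and after the last
    [e]: these numbers are lengths of spines of the two tableaux. With these invariants
    the first letter [d] of [v] can be brought to the front of [u]: the letter just
    before the first [d] of [u] occurs, like [d], both earlier and later, so the basis
    identities swap it with [d]. Induction on [v] then derives [u ~ v]. *)

Definition goes_right (s : bool) (x a : nat) : bool := if s then x < a else x <= a.

Lemma goes_right_le s x a : goes_right s x a -> x <= a.
Proof. by case: s => /=; lia. Qed.

Lemma goes_leftW s x a : ~~ goes_right s x a -> a <= x.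
Proof. by case: s => /=; lia. Qed.

Lemma goes_right_trans s x z a :
  ~~ goes_right s x z -> goes_right s x a -> goes_right s z a.
Proof. by case: s => /=; lia. Qed.

Lemma goes_left_trans s x z a :
  goes_right s x z -> ~~ goes_right s x a -> ~~ goes_right s z a.
Proof. by case: s => /=; lia. Qed.

Fixpoint ins (s : bool) (a : nat) (t : tree) : tree :=
  match t with
  | Leaf => Node Leaf a Leaf
  | Node l x r =>
      if goes_right s x a then Node l x (ins s a r) else Node (ins s a l) x r
  end.

Definition ptree (s : bool) (w : seq nat) : tree := foldr (ins s) Leaf w.

Lemma Psylv_ptree w : Psylv w = ptree true w.
Proof.
have insE a t : insertR a t = ins true a t by elim: t => //= l -> x r ->.
by elim: w => //= a w ->; rewrite insE.
Qed.

Lemma Psharp_ptree w : Psharp w = ptree false (rev w).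
Proof.
have insE a t : insertL a t = ins false a t.
  by elim: t => //= l -> x r ->; rewrite ltnNge; case: leqP.
rewrite /Psharp /ptree -[w in LHS]revK foldl_rev.
by elim: (rev w) => //= a w' ->; rewrite insE.
Qed.

Fixpoint labels (t : tree) : seq nat :=
  if t is Node l x r then labels l ++ x :: labels r else [::].

Fixpoint tsize (t : tree) : nat :=
  if t is Node l _ r then (tsize l + tsize r).+1 else 0.

Fixpoint search_tree (s : bool) (t : tree) : bool :=
  if t is Node l x r then
    [&& all (fun z => ~~ goes_right s x z) (labels l), all (goes_right s x) (labels r),
        search_tree s l & search_tree s r]
  else true.

Lemma mem_labels_ins s a t : labels (ins s a t) =i a :: labels t.
Proof.
move=> z; elim: t => [|l IHl x r IHr] //=.
by case: ifP => _; rewrite /= !(mem_cat, inE) ?IHl ?IHr /= ?inE;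
  case: (z == a); rewrite ?orbT.
Qed.

Lemma tsize_ins s a t : tsize (ins s a t) = (tsize t).+1.
Proof. by elim: t => //= l IHl x r IHr; case: ifP => _ /=; rewrite ?IHl ?IHr ?addnS. Qed.

Lemma search_tree_ins s a t : search_tree s t -> search_tree s (ins s a t).
Proof.
elim: t => [|l IHl x r IHr] //= /and4P[Hl Hr sl sr].
case: ifP => Hxa /=; apply/and4P; split; rewrite ?IHl ?IHr //;
  apply/allP => z; rewrite mem_labels_ins inE => /predU1P[->|]; rewrite ?Hxa //.
- by move/(allP Hr).
- by move/(allP Hl).
Qed.

Lemma mem_labels_foldr s t w : labels (foldr (ins s) t w) =i w ++ labels t.
Proof. by move=> z; elim: w => //= a w IH; rewrite mem_labels_ins !inE IH. Qed.

Lemma search_tree_foldr s t w : search_tree s t -> search_tree s (foldr (ins s) t w).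
Proof. by move=> st; elim: w => //= a w; apply: search_tree_ins. Qed.

Lemma mem_labels_ptree s w : labels (ptree s w) =i w.
Proof. by move=> z; rewrite mem_labels_foldr cats0. Qed.

Lemma tsize_ptree s w : tsize (ptree s w) = size w.
Proof. by elim: w => //= a w IH; rewrite tsize_ins IH. Qed.

Lemma ins_comm_separated s a b t : search_tree s t ->
  has (fun z => goes_right s z a != goes_right s z b) (labels t) ->
  ins s a (ins s b t) = ins s b (ins s a t).
Proof.
elim: t => [|l IHl x r IHr] //= /and4P[Hl Hr sl sr]; rewrite has_cat /=.
case Ea: (goes_right s x a); case Eb: (goes_right s x b) => //= sep; rewrite ?Ea ?Eb //.
- rewrite IHr //; case/orP: sep => // /hasP[z /(allP Hl) zl].
  by rewrite !(goes_right_trans zl) ?Ea ?Eb.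
- rewrite IHl //; case/orP: sep => // /hasP[z /(allP Hr) zr].
  by rewrite !(negbTE (goes_left_trans zr _)) ?Ea ?Eb.
Qed.

Lemma ins_comm s a b t : search_tree s t -> a \in labels t -> b \in labels t ->
  ins s a (ins s b t) = ins s b (ins s a t).
Proof.
move=> st ha hb; case: (eqVneq a b) => [->//|neq_ab].
apply: ins_comm_separated => //; apply/hasP.
case: (ltngtP a b) neq_ab => [ltab|ltba|->]; rewrite ?eqxx // => _; case: s {st} => /=.
- by exists a; rewrite // ltnn ltab.
- by exists b; rewrite // leqnn leqNgt ltab.
- by exists b; rewrite // ltnn ltba.
- by exists a; rewrite // leqnn leqNgt ltba.
Qed.

Lemma ins_foldr_comm s a t w : search_tree s t -> a \in labels t -> {subset w <= labels t} ->
  ins s a (foldr (ins s) t w) = foldr (ins s) (ins s a t) w.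
Proof.
move=> st ha; elim: w => //= b w IH sub_bw.
rewrite -IH => [|z zw]; last by apply: sub_bw; rewrite inE zw orbT.
apply: ins_comm; first exact: search_tree_foldr.
- by rewrite mem_labels_foldr mem_cat ha orbT.
- by rewrite mem_labels_foldr mem_cat sub_bw ?orbT ?mem_head.
Qed.

Lemma foldr_ins_catC s t u v : search_tree s t ->
  {subset u <= labels t} -> {subset v <= labels t} ->
  foldr (ins s) t (u ++ v) = foldr (ins s) t (v ++ u).
Proof.
move=> st; elim: u => [|a u IH] sub_u sub_v /=; first by rewrite cats0.
have sub_u' : {subset u <= labels t} by move=> z zu; apply: sub_u; rewrite inE zu orbT.
rewrite IH // !foldr_cat /= ins_foldr_comm //.
- exact: search_tree_foldr.
- by rewrite mem_labels_foldr mem_cat sub_u ?orbT ?mem_head.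
- by move=> z zv; rewrite mem_labels_foldr mem_cat sub_v ?orbT.
Qed.

Lemma ptree_cat s u v : ptree s (u ++ v) = foldr (ins s) (ptree s v) u.
Proof. exact: foldr_cat. Qed.

Lemma ptree_swap s u v w : {subset u <= w} -> {subset v <= w} ->
  ptree s (u ++ v ++ w) = ptree s (v ++ u ++ w).
Proof.
move=> sub_u sub_v; rewrite !catA !ptree_cat.
apply: foldr_ins_catC; first exact: search_tree_foldr.
- by move=> z /sub_u; rewrite mem_labels_ptree.
- by move=> z /sub_v; rewrite mem_labels_ptree.
Qed.

Lemma foldr_ins_Node s l x r w :
  foldr (ins s) (Node l x r) w =
  Node (foldr (ins s) l [seq a <- w | ~~ goes_right s x a]) x
       (foldr (ins s) r [seq a <- w | goes_right s x a]).
Proof. by elim: w => //= a w ->; rewrite /=; case: (goes_right s x a). Qed.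

Lemma ptree_rcons s w x :
  ptree s (rcons w x) =
  Node (ptree s [seq a <- w | ~~ goes_right s x a]) x (ptree s [seq a <- w | goes_right s x a]).
Proof. by rewrite -cats1 ptree_cat foldr_ins_Node. Qed.

Definition convex (P : pred nat) : Prop :=
  forall a b c, a <= b -> b <= c -> P a -> P c -> P b.

Lemma convexT : convex predT.
Proof. by []. Qed.

Lemma convexI P Q : convex P -> convex Q -> convex (predI P Q).
Proof.
move=> cP cQ a b c ab bc /andP[Pa Qa] /andP[Pc Qc].
by rewrite /= (cP a b c) // (cQ a b c).
Qed.

Lemma convex_goes_right s x : convex (goes_right s x).
Proof. by move=> a b c; case: s => /=; lia. Qed.

Lemma convex_goes_left s x : convex (fun a => ~~ goes_right s x a).
Proof. by move=> a b c; case: s => /=; lia. Qed.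

Lemma filter_id_in (P Q : pred nat) w :
  {in w, forall b, P b -> Q b} -> filter P (filter Q w) = filter P w.
Proof.
by move=> PQ; rewrite -filter_predI; apply: eq_in_filter => b /PQ /=; case: (P b) => // ->.
Qed.

(* The root of [ptree s (rcons u x)] is [x], and a convex [P] with [~~ P x] lies entirely
   on one side of [x]. *)
Lemma ptree_filter_convex s (P : pred nat) u v : convex P ->
  ptree s u = ptree s v -> ptree s [seq a <- u | P a] = ptree s [seq a <- v | P a].
Proof.
move=> cP; have [n] := ubnP (size u); elim: n u v => // n IH u v.
have filterC (Q : pred nat) w : filter Q (filter P w) = filter P (filter Q w).
  by rewrite -!filter_predI; apply: eq_filter => a /=; rewrite andbC.
case/lastP: u => [_ E|u x]; first by rewrite (size0nil (_ : size v = 0)) // -(tsize_ptree s) -E.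
case/lastP: v => [|v y]; first by rewrite ptree_rcons.
rewrite size_rcons ltnS !ptree_rcons !filter_rcons => lt_un [eql eqxy eqr]; subst y.
have lt_filter (Q : pred nat) : size [seq a <- u | Q a] < n.
  by rewrite size_filter (leq_ltn_trans (count_size _ _)).
case Px: (P x).
  by rewrite !ptree_rcons !filterC (IH _ _ (lt_filter _) eql) (IH _ _ (lt_filter _) eqr).
have side (Q : pred nat) : {in u ++ v, forall b, P b -> Q b} ->
    ptree s [seq a <- u | Q a] = ptree s [seq a <- v | Q a] ->
    ptree s [seq a <- u | P a] = ptree s [seq a <- v | P a].
  move=> PQ eqQ; rewrite -(filter_id_in (Q := Q) (w := u)); last first.
    by move=> b bu; apply: PQ; rewrite mem_cat bu.
  rewrite -(filter_id_in (Q := Q) (w := v)); last first.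
    by move=> b bv; apply: PQ; rewrite mem_cat bv orbT.
  exact: IH.
case: (boolP (has (predI P (goes_right s x)) (u ++ v))) => [/hasP[a _ /andP[Pa xa]]|noR].
- apply: (side _ _ eqr) => b _ Pb; apply: contraFT Px => xb.
  exact: (cP b x a (goes_leftW xb) (goes_right_le xa)).
- apply: (side _ _ eql) => b bw Pb; apply: contra noR => xb.
  by apply/hasP; exists b; rewrite //= Pb.
Qed.

Lemma foldr_ins_convex s t u v :
  (forall P, convex P -> ptree s (filter P u) = ptree s (filter P v)) ->
  foldr (ins s) t u = foldr (ins s) t v.
Proof.
elim: t u v => [|l IHl x r IHr] u v eq_conv.
  by have := eq_conv predT convexT; rewrite !filter_predT.
rewrite !foldr_ins_Node; congr Node; [apply: IHl | apply: IHr] => P cP;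
  rewrite -!filter_predI; apply: eq_conv; apply: convexI => //.
- exact: convex_goes_left.
- exact: convex_goes_right.
Qed.

Lemma ptree_catr s u v w : ptree s u = ptree s v -> ptree s (u ++ w) = ptree s (v ++ w).
Proof.
by move=> eq_uv; rewrite !ptree_cat; apply: foldr_ins_convex => P /ptree_filter_convex; apply.
Qed.

Lemma Pbaxt_congr a u v b : Pbaxt u = Pbaxt v -> Pbaxt (a ++ u ++ b) = Pbaxt (a ++ v ++ b).
Proof.
rewrite /Pbaxt !Psylv_ptree !Psharp_ptree => -[eq_sharp eq_sylv]; congr pair.
- by rewrite !rev_cat -!catA !(ptree_cat _ (rev b)) (ptree_catr _ eq_sharp).
- by rewrite !(ptree_cat _ a) (ptree_catr _ eq_sylv).
Qed.

Lemma Pbaxt_swap a u v b : {subset u <= a} -> {subset v <= a} ->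
  {subset u <= b} -> {subset v <= b} ->
  Pbaxt (a ++ u ++ v ++ b) = Pbaxt (a ++ v ++ u ++ b).
Proof.
move=> ua va ub vb; rewrite /Pbaxt !Psylv_ptree !Psharp_ptree; congr pair.
- rewrite !rev_cat -!catA !(ptree_cat _ (rev b)) ptree_swap // => z; rewrite !mem_rev.
  + exact: va.
  + exact: ua.
- by rewrite !(ptree_cat _ a) ptree_swap.
Qed.

Lemma subst_cat (t : nat -> seq nat) u v : subst t (u ++ v) = subst t u ++ subst t v.
Proof. by rewrite /subst map_cat flatten_cat. Qed.

Lemma subst_comp (t phi : nat -> seq nat) u :
  subst t (subst phi u) = subst (fun i => subst t (phi i)) u.
Proof. by elim: u => //= a u IH; rewrite /subst /= map_cat flatten_cat; congr cat. Qed.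

Lemma subst_mem (t : nat -> seq nat) u i : i \in u -> {subset t i <= subst t u}.
Proof.
elim: u => //= a u IH; rewrite inE => /predU1P[-> z zi|/IH sub z zi];
  by rewrite /subst /= mem_cat ?zi ?sub ?orbT.
Qed.

Definition baxt_law (u v : seq nat) : Prop :=
  forall t : nat -> seq nat, Pbaxt (subst t u) = Pbaxt (subst t v).

Lemma baxt_law_swap a b x y : x \in a -> y \in a -> x \in b -> y \in b ->
  baxt_law (a ++ x :: y :: b) (a ++ y :: x :: b).
Proof.
move=> xa ya xb yb t; rewrite !subst_cat; apply: Pbaxt_swap;
  by [apply: subst_mem xa | apply: subst_mem ya | apply: subst_mem xb | apply: subst_mem yb].
Qed.

Lemma baxt_basis_law p q : (p, q) \in baxt_basis -> baxt_law p q.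
Proof.
rewrite !inE => /orP[] /eqP[-> ->].
- exact: (@baxt_law_swap [:: vy; vs; vx; vt] [:: vh; vx; vk; vy]).
- exact: (@baxt_law_swap [:: vx; vs; vy; vt] [:: vh; vx; vk; vy]).
Qed.

Lemma derivable_law (Sigma : seq identity) u v :
  (forall p q, (p, q) \in Sigma -> baxt_law p q) -> derivable Sigma u v -> baxt_law u v.
Proof.
move=> Sigma_law; elim=> // {}u w {}v [a [b [phi [p [q [pq [-> ->]]]]]]] _ IH t.
rewrite -IH !subst_cat !subst_comp; apply: Pbaxt_congr.
by case: pq => /Sigma_law law; rewrite law.
Qed.

(** * Invariants of the identities of baxt_2 *)

Definition baxt2_sat (u v : seq nat) : Prop := baxt_satisfies (Some 2) (u, v).

Lemma baxt2_sat_sym u v : baxt2_sat u v -> baxt2_sat v u.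
Proof. by move=> sat t t2; rewrite /baxt_equiv (sat t t2). Qed.

Lemma baxt2_sat_trans u v w : baxt2_sat u v -> baxt2_sat v w -> baxt2_sat u w.
Proof. by move=> sat1 sat2 t t2; rewrite /baxt_equiv (sat1 t t2); apply: sat2. Qed.

Lemma baxt_law_satisfies n u v : baxt_law u v -> baxt_satisfies n (u, v).
Proof. by move=> law t _; apply: law. Qed.

Lemma baxt2_sat_perm u v : baxt2_sat u v -> perm_eq u v.
Proof.
move=> sat; apply/allP => x _; apply/eqP.
pose t i : seq nat := if i == x then [:: 1] else [::].
have size_t w : size (subst t w) = count_mem x w.
  by elim: w => //= a w IH; rewrite /subst /= size_cat -/(subst t w) IH /t; case: (a == x).
have [_ /(congr1 tsize)] : Pbaxt (subst t u) = Pbaxt (subst t v).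
  by apply: sat => i; rewrite /t; case: (i == x).
by rewrite !Psylv_ptree !tsize_ptree !size_t.
Qed.

(* [before e (rev w)] is the mirror image of the factor of [w] after its last [e]. *)
Definition before (e : nat) (w : seq nat) : seq nat := take (index e w) w.

Lemma before_cons e a w : before e (a :: w) = if a == e then [::] else a :: before e w.
Proof. by rewrite /before /=; case: (a == e). Qed.

Lemma before_notin e w : e \notin before e w.
Proof.
elim: w => //= a w IH; rewrite before_cons.
by case: eqP => //= /eqP ae; rewrite inE negb_or eq_sym ae.
Qed.

Lemma before_cat_notin e u v : e \notin u -> before e (u ++ v) = u ++ before e v.
Proof.
elim: u => //= a u IH; rewrite inE negb_or => /andP[ea eu].
by rewrite before_cons eq_sym (negbTE ea) IH.
Qed.

Lemma before_cat_in e u v : e \in u -> before e (u ++ v) = before e u.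
Proof. by move=> eu; rewrite /before index_cat eu takel_cat // index_size. Qed.

Lemma split_before e w : e \in w -> w = before e w ++ e :: drop (index e w).+1 w.
Proof.
move=> ew; rewrite {2}[e](esym (nth_index e ew)) -drop_nth ?index_mem //.
by rewrite cat_take_drop.
Qed.

Fixpoint rspine (k : nat) (t : tree) : nat :=
  if t is Node _ x r then if x == k then (rspine k r).+1 else 0 else 0.

Fixpoint lspine (k : nat) (t : tree) : nat :=
  if t is Node l x _ then if x == k then (lspine k l).+1 else 0 else 0.

Lemma rspine_ptree_rev k w : all (leq k) w -> rspine k (ptree false (rev w)) = find (predC1 k) w.
Proof.
elim: w => //= a w IH /andP[ka kw]; rewrite rev_cons ptree_rcons /=.
case: eqP => //= ak; rewrite ak in ka *.
by rewrite (all_filterP _) ?IH // all_rev.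
Qed.

Lemma lspine_ptree k w : all (geq k) w -> lspine k (ptree true w) = find (predC1 k) (rev w).
Proof.
elim/last_ind: w => //= w a IH; rewrite all_rcons rev_rcons ptree_rcons => /andP[ak kw] /=.
case: eqP => //= ak'; rewrite ak' in ak *.
by rewrite (all_filterP _) ?IH //; apply: sub_all kw => b /=; rewrite -leqNgt.
Qed.

Definition mark (e x j k : nat) (i : nat) : seq nat :=
  if i == e then [:: j] else if i == x then [:: k] else [::].

Lemma find_subst_mark (e x j k : nat) u : j != k -> x != e ->
  find (predC1 k) (subst (mark e x j k) u) = count_mem x (before e u).
Proof.
move=> jk xe; elim: u => //= a u IH; rewrite /subst /= -/(subst _ u) before_cons {1}/mark.
case: ifP => [_ /=|_]; first by rewrite jk.
by case: ifP => /= [/eqP->|->]; rewrite ?eqxx /= IH.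
Qed.

Lemma all_subst (P : pred nat) t u : (forall i, all P (t i)) -> all P (subst t u).
Proof. by move=> tP; elim: u => //= a u IH; rewrite /subst /= all_cat tP. Qed.

Lemma all_mark (P : pred nat) e x j k : P j -> P k -> forall i, all P (mark e x j k i).
Proof.
move=> Pj Pk i; rewrite /mark.
by case: ifP => _; rewrite /= ?andbT //; case: ifP; rewrite /= ?andbT.
Qed.

Lemma rev_subst_mark e x j k u : rev (subst (mark e x j k) u) = subst (mark e x j k) (rev u).
Proof.
elim: u => //= a u IH; rewrite rev_cons -cats1 subst_cat -IH.
rewrite /subst /= rev_cat cats0.
by rewrite /mark; case: ifP => _ //; case: ifP.
Qed.

Lemma baxt2_sat_before e u v : baxt2_sat u v -> perm_eq (before e u) (before e v).
Proof.
move=> sat; apply/allP => x _; apply/eqP.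
have [->|xe] := eqVneq x e; first by rewrite !(count_memPn (before_notin _ _)).
have [/(congr1 (rspine 1)) + _] := sat (mark e x 2 1) (all_mark e x isT isT).
by rewrite !Psharp_ptree !rspine_ptree_rev ?all_subst ?find_subst_mark //;
  apply: all_mark.
Qed.

Lemma baxt2_sat_after e u v : baxt2_sat u v -> perm_eq (before e (rev u)) (before e (rev v)).
Proof.
move=> sat; apply/allP => x _; apply/eqP.
have [->|xe] := eqVneq x e; first by rewrite !(count_memPn (before_notin _ _)).
have [_ /(congr1 (lspine 2))] := sat (mark e x 1 2) (all_mark e x isT isT).
by rewrite !Psylv_ptree !lspine_ptree ?all_subst ?rev_subst_mark ?find_subst_mark //;
  apply: all_mark.
Qed.

Lemma split_two (c d : nat) w : c != d -> c \in w -> d \in w ->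
  exists w1 w2 w3, w = w1 ++ c :: w2 ++ d :: w3 \/ w = w1 ++ d :: w2 ++ c :: w3.
Proof.
move=> cd /splitPr[p r]; rewrite mem_cat inE eq_sym (negbTE cd) /=.
case/orP=> [/splitPr[p1 p2] | /splitPr[r1 r2]].
- by exists p1, p2, r; right; rewrite -catA.
- by exists p, r1, r2; left.
Qed.

Lemma deriv_step_swap (a b : seq nat) (c d : nat) : c != d ->
  c \in a -> d \in a -> c \in b -> d \in b ->
  deriv_step baxt_basis (a ++ c :: d :: b) (a ++ d :: c :: b).
Proof.
move=> cd ca da cb db.
pose phi (x y : nat) (a2 a3 b1 b2 : seq nat) i := nth [::] [:: [:: x]; [:: y]; a2; a3; b1; b2] i.
pose law i := nth ([::], [::]) baxt_basis i.
have law_in i : i < 2 -> ((law i).1, (law i).2) \in baxt_basis.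
  by move=> lt_i2; rewrite -surjective_pairing mem_nth.
have [a1 [a2 [a3 [->|->]]]] := split_two cd ca da;
have [b1 [b2 [b3 [->|->]]]] := split_two cd cb db.
- exists a1, b3, (phi c d a2 a3 b1 b2), (law 1).1, (law 1).2.
  by split; [left; exact: law_in | split; rewrite /subst /phi /=; repeat rewrite -!catA /=].
- exists a1, b3, (phi d c a2 a3 b1 b2), (law 0).2, (law 0).1.
  by split; [right; exact: law_in | split; rewrite /subst /phi /=; repeat rewrite -!catA /=].
- exists a1, b3, (phi c d a2 a3 b1 b2), (law 0).1, (law 0).2.
  by split; [left; exact: law_in | split; rewrite /subst /phi /=; repeat rewrite -!catA /=].
- exists a1, b3, (phi d c a2 a3 b1 b2), (law 1).2, (law 1).1.
  by split; [right; exact: law_in | split; rewrite /subst /phi /=; repeat rewrite -!catA /=].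
Qed.

Lemma derivable_trans (Sigma : seq identity) u v w :
  derivable Sigma u v -> derivable Sigma v w -> derivable Sigma u w.
Proof. by elim=> // {}u x {}v step _ IH /IH; apply: der_step step. Qed.

Lemma derivable_baxt2_sat u v : derivable baxt_basis u v -> baxt2_sat u v.
Proof. by move/(derivable_law baxt_basis_law); apply: baxt_law_satisfies. Qed.

Lemma count_before_le (x e : nat) w : count_mem x (before e w) <= count_mem x w.
Proof. by rewrite -{2}(cat_take_drop (index e w) w) count_cat leq_addr. Qed.

Lemma moved_letter_occurs w p d r v : baxt2_sat (w ++ p ++ d :: r) (w ++ d :: v) ->
  d \notin p -> p != [::] -> (d \in w) && (d \in r).
Proof.
move=> sat dp p_nil.
have perm_pr : perm_eq (p ++ d :: r) (d :: v) by rewrite -(perm_cat2l w) baxt2_sat_perm.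
have dw : d \in w.
  apply: contraR p_nil => dw; rewrite -size_eq0; apply/eqP.
  have := perm_size (baxt2_sat_before d sat).
  rewrite !before_cat_notin // !before_cons eqxx !size_cat /= !addn0.
  by rewrite -{2}[size w]addn0 => /addnI.
rewrite dw /=; apply: contraT => dr.
have dv : d \notin v.
  have := permP perm_pr (pred1 d); rewrite count_cat /= eqxx (count_memPn dp) (count_memPn dr).
  by move/eqP; rewrite eqSS eq_sym => /eqP/count_memPn.
have := perm_size (baxt2_sat_after d sat).
rewrite !rev_cat !rev_cons -!cats1 -!catA /=.
rewrite !before_cat_notin ?mem_rev // !before_cons eqxx !cats0 !size_rev => size_rv.
have /size0nil p0 : size p = 0 by move: (perm_size perm_pr); rewrite size_cat /= size_rv; lia.
by rewrite p0 in p_nil.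
Qed.

Lemma swapped_letter_occurs w p e d r v : baxt2_sat (w ++ rcons p e ++ d :: r) (w ++ d :: v) ->
  d \notin rcons p e -> (e \in w ++ p) && (e \in r).
Proof.
rewrite mem_rcons inE negb_or => sat /andP[de dp]; have ed : e != d by rewrite eq_sym.
have perm_pr : perm_eq (rcons p e ++ d :: r) (d :: v) by rewrite -(perm_cat2l w) baxt2_sat_perm.
have count_r : count_mem d r = count_mem d v.
  have := permP perm_pr (pred1 d).
  by rewrite -cats1 -catA !count_cat /= eqxx (negbTE ed) (count_memPn dp); lia.
have ewp : e \in w ++ p.
  apply: contraT => ewp; have := permP (baxt2_sat_before e sat) (pred1 d).
  have ew : e \notin w by apply: contra ewp; rewrite mem_cat => ->.
  rewrite -cats1 -catA catA !(before_cat_notin _ ewp) (before_cat_notin _ ew) /=.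
  rewrite !before_cons eqxx (negbTE de) !count_cat /= eqxx (count_memPn dp); lia.
rewrite ewp /=; apply: contraT => er.
have ev : e \in v.
  have := perm_mem perm_pr e; rewrite mem_cat mem_rcons mem_head /= => /esym.
  by rewrite in_cons (negbTE ed).
have := permP (baxt2_sat_after e sat) (pred1 d).
rewrite !rev_cat !rev_cons rev_rcons -!cats1 -!catA /= before_cat_notin ?mem_rev //.
rewrite !before_cons (negbTE de) eqxx before_cat_in ?mem_rev // count_cat count_rev count_r /=.
have := count_before_le d e (rev v); rewrite count_rev eqxx addn1 => le_bv eq_v.
by rewrite -eq_v ltnn in le_bv.
Qed.

Lemma rcons_neq0 (e : nat) p : rcons p e != [::].
Proof. by case: p. Qed.

Lemma derivable_move_front w p d r v : baxt2_sat (w ++ p ++ d :: r) (w ++ d :: v) ->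
  d \notin p -> derivable baxt_basis (w ++ p ++ d :: r) (w ++ d :: p ++ r).
Proof.
elim/last_ind: p r => [|p e IH] r sat dp; first exact: der_refl.
have /andP[dw dr] := moved_letter_occurs sat dp (rcons_neq0 e p).
have /andP[ewp er] := swapped_letter_occurs sat dp.
move: dp; rewrite mem_rcons inE negb_or => /andP[de dp].
have step : deriv_step baxt_basis (w ++ rcons p e ++ d :: r) (w ++ p ++ d :: e :: r).
  rewrite cat_rcons !catA; apply: deriv_step_swap => //.
  - by rewrite eq_sym.
  - by rewrite mem_cat dw.
apply: (der_step step); rewrite cat_rcons; apply: IH dp.
apply: baxt2_sat_trans sat; apply/baxt2_sat_sym/derivable_baxt2_sat.
exact: der_step step (der_refl _ _).
Qed.

Lemma derivable_of_baxt2_sat w u v :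
  baxt2_sat (w ++ u) (w ++ v) -> derivable baxt_basis (w ++ u) (w ++ v).
Proof.
elim: v w u => [|d v IH] w u sat;
  have := baxt2_sat_perm sat; rewrite perm_cat2l => perm_uv.
  by move/perm_nilP: perm_uv => ->; apply: der_refl.
have du : d \in u by rewrite (perm_mem perm_uv) mem_head.
rewrite (split_before du) in sat *.
have front := derivable_move_front sat (before_notin d u).
apply: (derivable_trans front); rewrite -!cat_rcons; apply: IH; rewrite !cat_rcons.
exact: baxt2_sat_trans (baxt2_sat_sym (derivable_baxt2_sat front)) sat.
Qed.

Lemma baxt2_sat_of_satisfies n u v : rank_ge2 n -> baxt_satisfies n (u, v) -> baxt2_sat u v.
Proof.
move=> n2 sat t t2; apply: sat => i; apply: sub_all (t2 i) => a.
by case: n n2 => [m|] //=; rewrite /in_alph /= => m2 /andP[-> a2] //; apply: leq_trans m2.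
Qed.

Theorem theorem4p10 :
  (forall n : rank, rank_ge2 n -> baxt_identity_basis n baxt_basis) /\
  (forall n m : rank, rank_ge2 n -> rank_ge2 m ->
     forall id : identity, baxt_satisfies n id <-> baxt_satisfies m id).
Proof.
have complete n (id : identity) :
    rank_ge2 n -> baxt_satisfies n id -> derivable baxt_basis id.1 id.2.
  by case: id => u v n2 /(baxt2_sat_of_satisfies n2) /(@derivable_of_baxt2_sat [::]).
have sound n (id : identity) : derivable baxt_basis id.1 id.2 -> baxt_satisfies n id.
  by case: id => u v /(derivable_law baxt_basis_law) /baxt_law_satisfies.
split=> [n n2 | n m n2 m2 id].
- split=> [[p q] /baxt_basis_law /baxt_law_satisfies //|id]; exact: complete.
- by split=> /complete; [move/(_ n2) | move/(_ m2)]; apply: sound.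
Qed.
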